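(* Let $0<m<L$, $\alpha>0$, $\delta\in(0,1)$, and $\rho_\mathrm{GD}(\delta)=\max(1-\alpha m(1-\delta),\ \alpha L(1+\delta)-1)$. Define for $t,\lambda\in\mathbb{R}$ \[ F(t,\lambda) = -\alpha^2(L-m)^2+2mL\alpha^2\lambda(1-\delta^2) +2\alpha\lambda(m+L)(t-1) + \lambda(2-\delta^2\lambda)(t-1)^2, \] and \[ \rho_\star=\inf\{\rho\ge\rho_\mathrm{GD}(\delta):\ F(\rho,\lambda)\ge0 \text{ and } F(-\rho,\lambda)\ge0 \text{ for some }\lambda\in[0,2/\delta^2]\}. \] Let $\lambda_\star\in[0,2/\delta^2]$ be any number with $F(\rho_\star,\lambda_\star)\ge0$ and $F(-\rho_\star,\lambda_\star)\ge0$. Then: (1) $\min(F(\rho_\star,\lambda_\star),F(-\rho_\star,\lambda_\star))=0$; (2) $\lambda_\star\in(0,2/\delta^2)$; (3) if $\max(F(\rho_\star,\lambda_\star),F(-\rho_\star,\lambda_\star))>0$, then $\rho_\star=\rho_\mathrm{GD}(\delta)$.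
   Context: The infimum defining $\rho_\star$ is over a nonempty set, so $\rho_\star$ is finite, and by continuity of $F$ a number $\lambda_\star$ as in the statement exists. *)

From HB Require Import structures.
From mathcomp Require Import all_boot all_order all_algebra.
From mathcomp Require Import boolp classical_sets reals.
Set Implicit Arguments. Unset Strict Implicit. Unset Printing Implicit Defensive.
Import Order.TTheory GRing.Theory Num.Theory.
Local Open Scope ring_scope.
Local Open Scope classical_set_scope.

Section Defs.
Variable R : realType.

Definition rhoGD (m L alpha delta : R) : R :=
  Num.max (1 - alpha * m * (1 - delta)) (alpha * L * (1 + delta) - 1).

Definition Fq (m L alpha delta : R) (t lam : R) : R :=
  - alpha ^+ 2 * (L - m) ^+ 2
  + 2 * m * L * alpha ^+ 2 * lam * (1 - delta ^+ 2)
  + 2 * alpha * lam * (m + L) * (t - 1)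
  + lam * (2 - delta ^+ 2 * lam) * (t - 1) ^+ 2.

Definition rho_set (m L alpha delta : R) : set R :=
  [set rho | rhoGD m L alpha delta <= rho /\
     exists lam, 0 <= lam <= 2 / delta ^+ 2 /\
       0 <= Fq m L alpha delta rho lam /\ 0 <= Fq m L alpha delta (- rho) lam].

Definition rho_star (m L alpha delta : R) : R := inf (rho_set m L alpha delta).
End Defs.

From HB Require Import structures.
From mathcomp Require Import all_boot all_order all_algebra.
From mathcomp Require Import boolp classical_sets reals.
From mathcomp Require Import ring lra.
Set Implicit Arguments.
Unset Strict Implicit.
Import Order.TTheory GRing.Theory Num.Theory.
Local Open Scope ring_scope.

(* At t = 1 - alpha m (1 - delta) and t = 1 - alpha L (1 + delta), F(t, lam) is minus a square
   for every lam; one of these is rho_GD or -rho_GD, which gives (1) and (3) when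
   rho_star = rho_GD.  For (2), F(t, 0) < 0 and F(-rho, 2/delta^2) < 0 once
   rho >= rho_GD.  If rho_star > rho_GD, both values must vanish: were both positive, F would
   stay positive at a slightly smaller rho; were only one of them zero, moving lam along the
   sign of dF/dlam at that root would make both positive.  That derivative cannot vanish
   there, because F = dF/dlam = 0 with lam > 0 forces |t| <= rho_GD. *)

Lemma quadratic_pos_near0 {R : realFieldType} (x b c : R) : 0 < x ->
  exists2 e, 0 < e & forall h, `|h| <= e -> 0 < x + b * h + c * h ^+ 2.
Proof.
move=> x_gt0; have K_gt0 : 0 < `|b| + `|c| + 1 by rewrite ltr_wpDl // addr_ge0.
exists (Num.min 1 (x / (`|b| + `|c| + 1))); first by rewrite lt_min ltr01 divr_gt0.
move=> h; rewrite le_min => /andP[h_le1]; rewrite ler_pdivlMr // => hK.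
have bound : `|b * h + c * h ^+ 2| <= (`|b| + `|c|) * `|h|.
  apply: (le_trans (ler_normD _ _)).
  by rewrite !normrM mulrDl lerD2l ler_wpM2l // ler_piMr.
move: bound; rewrite ler_norml => /andP[lo _].
have := normr_ge0 h; have := normr_ge0 b; have := normr_ge0 c.
nra.
Qed.

Section Fq_theory.
Context {R : realType} {m L a d : R}.
Hypotheses (m_gt0 : 0 < m) (m_lt_L : m < L) (a_gt0 : 0 < a)
  (d_gt0 : 0 < d) (d_lt1 : d < 1).

Local Notation F := (Fq m L a d).
Local Notation G := (rhoGD m L a d).

Definition dFq_dt (t lam : R) : R :=
  2 * a * lam * (m + L) + 2 * lam * (2 - d ^+ 2 * lam) * (t - 1).

Definition dFq_dlam (t lam : R) : R :=
  2 * m * L * a ^+ 2 * (1 - d ^+ 2) + 2 * a * (m + L) * (t - 1)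
  + 2 * (1 - d ^+ 2 * lam) * (t - 1) ^+ 2.

Lemma Fq_taylor_t t lam h :
  F (t + h) lam = F t lam + dFq_dt t lam * h + lam * (2 - d ^+ 2 * lam) * h ^+ 2.
Proof. by rewrite /Fq /dFq_dt; ring. Qed.

Lemma Fq_taylor_lam t lam h :
  F t (lam + h) = F t lam + dFq_dlam t lam * h - d ^+ 2 * (t - 1) ^+ 2 * h ^+ 2.
Proof. by rewrite /Fq /dFq_dlam; ring. Qed.

Lemma Fq_pos_near_t t lam : 0 < F t lam ->
  exists2 e, 0 < e & forall h, `|h| <= e -> 0 < F (t + h) lam.
Proof.
move=> F_gt0.
have [e e_gt0 pos] := quadratic_pos_near0 (dFq_dt t lam) (lam * (2 - d ^+ 2 * lam)) F_gt0.
by exists e => // h /pos; rewrite Fq_taylor_t.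
Qed.

Lemma Fq_pos_near_lam t lam : 0 < F t lam ->
  exists2 e, 0 < e & forall h, `|h| <= e -> 0 < F t (lam + h).
Proof.
move=> F_gt0.
have [e e_gt0 pos] := quadratic_pos_near0 (dFq_dlam t lam) (- (d ^+ 2 * (t - 1) ^+ 2)) F_gt0.
by exists e => // h /pos; rewrite Fq_taylor_lam mulNr.
Qed.

Lemma Fq_lam0_lt0 t : F t 0 < 0.
Proof.
have -> : F t 0 = - (a * (L - m)) ^+ 2 by rewrite /Fq; ring.
by rewrite oppr_lt0 exprn_gt0 // mulr_gt0 // subr_gt0.
Qed.

Lemma Fq_lam_max_lt0 rho : a * L * (1 + d) - 1 <= rho -> F (- rho) (2 / d ^+ 2) < 0.
Proof.
move=> rho_ge.
have d2_gt0 : 0 < d ^+ 2 by rewrite exprn_gt0.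
have L_gt0 : 0 < L by apply: lt_trans m_lt_L.
rewrite -(pmulr_rlt0 _ d2_gt0).
have -> : d ^+ 2 * F (- rho) (2 / d ^+ 2) =
    - (a * (L - m) * d) ^+ 2 - 4 * a ^+ 2 * L * (1 + d) * (L + m * d)
    - 4 * a * (m + L) * (1 + rho - a * L * (1 + d)).
  by rewrite /Fq; field; rewrite gt_eqF.
have := sqr_ge0 (a * (L - m) * d).
have : 0 < a ^+ 2 * L * (1 + d) * (L + m * d).
  by rewrite !mulr_gt0 ?exprn_gt0 ?addr_gt0 ?mulr_gt0.
have : 0 <= a * (m + L) * (1 + rho - a * L * (1 + d)).
  by apply: mulr_ge0; [rewrite ltW // mulr_gt0 // addr_gt0 | lra].
lra.
Qed.

Lemma Fq_rhoGD_min_le0 lam : Num.min (F G lam) (F (- G) lam) <= 0.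
Proof.
rewrite ge_min /rhoGD; have [_|_] := leP (a * L * (1 + d) - 1) (1 - a * m * (1 - d)).
- have -> : F (1 - a * m * (1 - d)) lam
      = - (a * (L - m) - d * lam * (a * m * (1 - d))) ^+ 2 by rewrite /Fq; ring.
  by rewrite oppr_le0 sqr_ge0.
- have -> : F (- (a * L * (1 + d) - 1)) lam
      = - (a * (L - m) - d * lam * (a * L * (1 + d))) ^+ 2 by rewrite /Fq; ring.
  by rewrite oppr_le0 sqr_ge0 orbT.
Qed.

Lemma rate_m_lt_rate_L : a * m * (1 - d) < a * L * (1 + d).
Proof.
rewrite -!mulrA ltr_pM2l // mulrBr mulrDr !mulr1 [m * d]mulrC [L * d]mulrC.
have L_gt0 : 0 < L by apply: lt_trans m_lt_L.
by have := m_lt_L; have := mulr_gt0 d_gt0 m_gt0; have := mulr_gt0 d_gt0 L_gt0; lra.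
Qed.

Lemma rhoGD_gt0 : 0 < G.
Proof.
rewrite /rhoGD lt_max; apply/orP; have ordered := rate_m_lt_rate_L.
by have [gt1|le1] := ltP 1 (a * L * (1 + d)); [right | left]; lra.
Qed.

Lemma abs_le_rhoGD t :
  1 - a * L * (1 + d) <= t <= 1 - a * m * (1 - d) -> `|t| <= G.
Proof.
move=> /andP[lo hi]; rewrite ler_norml lerNl /rhoGD !le_max.
by apply/andP; split; apply/orP; [right | left]; lra.
Qed.

(* Where F and its lambda-derivative vanish together, (d lam (t - 1))^2 = (a (L - m))^2,
   and the derivative then factors with roots at the two gradient-descent rates. *)
Lemma Fq_stationary_root_le_rhoGD t lam : 0 < lam ->
  F t lam = 0 -> dFq_dlam t lam = 0 -> `|t| <= G.
Proof.
move=> lam_gt0 F0 D0; apply: abs_le_rhoGD.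
set s := t - 1; set X := a * (L - m).
have X_gt0 : 0 < X by rewrite mulr_gt0 // subr_gt0.
have L_gt0 : 0 < L by apply: lt_trans m_lt_L.
have : (d * lam * s - X) * (d * lam * s + X) = F t lam - lam * dFq_dlam t lam.
  by rewrite /s /X /Fq /dFq_dlam; ring.
rewrite F0 D0 mulr0 subr0 => /eqP; rewrite mulf_eq0 => /orP[] /eqP root.
- have s_gt0 : 0 < s.
    rewrite -(pmulr_rgt0 _ (mulr_gt0 d_gt0 lam_gt0)); lra.
  have pos_m : 0 < s + a * m * (1 + d) by rewrite addr_gt0 // !mulr_gt0 // addr_gt0.
  have pos_L : 0 < s + a * L * (1 - d) by rewrite addr_gt0 // !mulr_gt0 // subr_gt0.
  have : dFq_dlam t lam = 2 * ((s + a * m * (1 + d)) * (s + a * L * (1 - d)))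
                          - 2 * d * s * (d * lam * s - X).
    by rewrite /s /X /dFq_dlam; ring.
  rewrite root mulr0 subr0 D0 => /esym/eqP; apply: contraTT => _.
  by rewrite gt_eqF // !mulr_gt0.
- have : dFq_dlam t lam = 2 * ((s + a * m * (1 - d)) * (s + a * L * (1 + d)))
                          - 2 * d * s * (d * lam * s + X).
    by rewrite /s /X /dFq_dlam; ring.
  rewrite root mulr0 subr0 D0 => /esym/eqP; rewrite mulf_eq0 pnatr_eq0 /= mulf_eq0.
  have ordered := rate_m_lt_rate_L.
  by move=> /orP[] /eqP; rewrite /s => rate; apply/andP; split; lra.
Qed.

Lemma Fq_perturb_lam t1 t2 lam : 0 < lam < 2 / d ^+ 2 ->
  F t1 lam = 0 -> dFq_dlam t1 lam != 0 -> 0 < F t2 lam ->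
  exists2 lam', 0 <= lam' <= 2 / d ^+ 2 & 0 < F t1 lam' /\ 0 < F t2 lam'.
Proof.
move=> /andP[lam_gt0 lam_lt] F1_eq0 D1_neq0 F2_gt0.
have D1_gt0 : 0 < `|dFq_dlam t1 lam| by rewrite normr_gt0.
have [e1 e1_gt0 pos1] := quadratic_pos_near0 (- (d ^+ 2 * (t1 - 1) ^+ 2)) 0 D1_gt0.
have [e2 e2_gt0 pos2] := Fq_pos_near_lam F2_gt0.
pose eta := Num.min (Num.min e1 e2) (Num.min lam (2 / d ^+ 2 - lam)).
have eta_gt0 : 0 < eta by rewrite !lt_min e1_gt0 e2_gt0 lam_gt0 subr_gt0 lam_lt.
have [eta_le1 eta_le2] : eta <= e1 /\ eta <= e2 by rewrite !ge_min !lexx !orbT.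
have eta_le : eta <= lam /\ eta <= 2 / d ^+ 2 - lam by rewrite !ge_min !lexx !orbT.
(* F t1 vanishes at lam, so the first-order term h * dFq_dlam t1 lam decides the sign *)
pose h := Num.sg (dFq_dlam t1 lam) * eta.
have norm_h : `|h| = eta by rewrite normrM normr_sg D1_neq0 mul1r gtr0_norm.
exists (lam + h).
  by move: (lexx `|h|); rewrite {2}norm_h ler_norml => /andP[? ?]; apply/andP; split; lra.
split; last by apply: pos2; rewrite norm_h.
have -> : F t1 (lam + h) = eta * (`|dFq_dlam t1 lam|
    + - (d ^+ 2 * (t1 - 1) ^+ 2) * eta + 0 * eta ^+ 2).
  by rewrite Fq_taylor_lam F1_eq0 /h exprMn sqr_sg D1_neq0 mul1r normrEsg; ring.
by rewrite mulr_gt0 // pos1 // gtr0_norm.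
Qed.

Lemma Fq_ge0_far t :
  2 * a * (m + L) + a * (L - m) <= `|t - 1| -> 0 <= F t (1 / d ^+ 2).
Proof.
move=> far.
have d2_gt0 : 0 < d ^+ 2 by rewrite exprn_gt0.
have d2_le1 : d ^+ 2 <= 1 by rewrite expr_le1 ?ltW.
have L_gt0 : 0 < L by apply: lt_trans m_lt_L.
set s := t - 1; set X := a * (L - m); set P := a * (m + L).
have X_ge0 : 0 <= X by rewrite ltW // mulr_gt0 // subr_gt0.
have P_ge0 : 0 <= P by rewrite ltW // mulr_gt0 // addr_gt0.
have {}far : 2 * P + X <= `|s| by move: far; rewrite /s /X /P; lra.
rewrite -(pmulr_rge0 _ d2_gt0).
have -> : d ^+ 2 * F t (1 / d ^+ 2) = 2 * m * L * a ^+ 2 * (1 - d ^+ 2)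
    + X ^+ 2 * (1 - d ^+ 2) + (s ^+ 2 + 2 * P * s - X ^+ 2).
  by rewrite /s /X /P /Fq; field; rewrite gt_eqF.
have mLa_ge0 : 0 <= 2 * m * L * a ^+ 2 * (1 - d ^+ 2).
  by apply: mulr_ge0; rewrite ?subr_ge0 // !mulr_ge0 ?sqr_ge0 ?ltW.
have X2_ge0 : 0 <= X ^+ 2 * (1 - d ^+ 2) by rewrite mulr_ge0 ?sqr_ge0 ?subr_ge0.
have prod_ge : X * X <= `|s| * (`|s| - 2 * P) by apply: ler_pM => //; lra.
have Ps_ge : - (P * `|s|) <= P * s.
  by rewrite -mulrN ler_wpM2l // lerNl ler_normr lexx orbT.
have s2 : s ^+ 2 = `|s| ^+ 2 by rewrite real_normK ?num_real.
by move: prod_ge; rewrite s2 !expr2; lra.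
Qed.

Local Notation rS := (rho_star m L a d).

Lemma rho_star_le r : rho_set m L a d r -> rS <= r.
Proof. by move=> r_in; apply: ge_inf => //; exists G => ? []. Qed.

Lemma rho_set_neq0 : (rho_set m L a d !=set0)%classic.
Proof.
pose K := 2 * a * (m + L) + a * (L - m).
have L_gt0 : 0 < L by apply: lt_trans m_lt_L.
have K_gt0 : 0 < K by rewrite /K addr_gt0 // ?mulr_gt0 // ?subr_gt0 // addr_gt0.
have d2_gt0 : 0 < d ^+ 2 by rewrite exprn_gt0.
exists (Num.max G (1 + K)); split; first by rewrite le_max lexx.
exists (1 / d ^+ 2); split.
  by rewrite divr_ge0 ?sqr_ge0 //= ler_pM2r ?invr_gt0 // ler1n.
have w_ge : 1 + K <= Num.max G (1 + K) by rewrite le_max lexx orbT.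
split; apply: Fq_ge0_far; rewrite -/K.
  by rewrite ger0_norm; lra.
by rewrite ler0_norm; lra.
Qed.

Lemma rhoGD_le_rho_star : G <= rS.
Proof. by apply: lb_le_inf rho_set_neq0 _ => ? []. Qed.

Lemma rho_set_lt rho lam : G < rho -> 0 <= lam <= 2 / d ^+ 2 ->
  0 < F rho lam -> 0 < F (- rho) lam -> exists2 r, rho_set m L a d r & r < rho.
Proof.
move=> G_lt lam_in F1_gt0 F2_gt0.
have [e1 e1_gt0 pos1] := Fq_pos_near_t F1_gt0.
have [e2 e2_gt0 pos2] := Fq_pos_near_t F2_gt0.
pose eta := Num.min (Num.min e1 e2) (rho - G).
have eta_gt0 : 0 < eta by rewrite !lt_min e1_gt0 e2_gt0 subr_gt0.
have [eta_le1 eta_le2] : eta <= e1 /\ eta <= e2 by rewrite !ge_min !lexx !orbT.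
have eta_le : eta <= rho - G by rewrite ge_min lexx orbT.
exists (rho - eta); last by rewrite ltrBlDr ltrDl.
split; first by lra.
exists lam; split => //; split; apply: ltW.
  by apply: pos1; rewrite normrN gtr0_norm.
by rewrite opprB addrC; apply: pos2; rewrite gtr0_norm.
Qed.

Lemma Fq_rho_star_eq0 lam : G < rS -> 0 < lam < 2 / d ^+ 2 ->
  0 <= F rS lam -> 0 <= F (- rS) lam -> F rS lam = 0 /\ F (- rS) lam = 0.
Proof.
move=> G_lt lam_in F1_ge0 F2_ge0.
have no_pos lam' : 0 <= lam' <= 2 / d ^+ 2 -> 0 < F rS lam' -> 0 < F (- rS) lam' -> False.
  move=> lam'_in F1_gt0 F2_gt0.
  have [r r_in r_lt] := rho_set_lt G_lt lam'_in F1_gt0 F2_gt0.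
  by move: (rho_star_le r_in); rewrite leNgt r_lt.
have rS_gt0 : 0 < rS by apply: lt_trans G_lt; apply: rhoGD_gt0.
have unstick t1 t2 : `|t1| = rS -> F t1 lam = 0 -> 0 < F t2 lam ->
    exists2 lam', 0 <= lam' <= 2 / d ^+ 2 & 0 < F t1 lam' /\ 0 < F t2 lam'.
  move=> t1_abs F1_eq0 F2_gt0; apply: (Fq_perturb_lam lam_in F1_eq0 _ F2_gt0).
  apply/eqP => D0; case/andP: lam_in => lam_gt0 _.
  by move: (Fq_stationary_root_le_rhoGD lam_gt0 F1_eq0 D0); rewrite t1_abs leNgt G_lt.
have lam_range : 0 <= lam <= 2 / d ^+ 2.
  by case/andP: lam_in => lam_gt0 lam_lt; rewrite !ltW.
move: F1_ge0 F2_ge0; rewrite !le_eqVlt => /orP[/eqP F1|F1] /orP[/eqP F2|F2] //.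
- have [lam' lam'_in [p1 p2]] := unstick rS (- rS) (gtr0_norm rS_gt0) (esym F1) F2.
  by case: (no_pos lam' lam'_in p1 p2).
- have abs_neg_rS : `|- rS| = rS by rewrite normrN gtr0_norm.
  have [lam' lam'_in [p2 p1]] := unstick (- rS) rS abs_neg_rS (esym F2) F1.
  by case: (no_pos lam' lam'_in p1 p2).
- by case: (no_pos lam lam_range F1 F2).
Qed.

Lemma Fq_nonneg_lam_interior rho lam : G <= rho -> 0 <= lam <= 2 / d ^+ 2 ->
  0 <= F rho lam -> 0 <= F (- rho) lam -> 0 < lam < 2 / d ^+ 2.
Proof.
move=> G_le /andP[lam_ge0 lam_le] F1_ge0 F2_ge0.
rewrite !lt_neqAle lam_ge0 lam_le !andbT; apply/andP; split.
  by apply: contraTneq F1_ge0 => <-; rewrite -ltNge Fq_lam0_lt0.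
apply: contraTneq F2_ge0 => ->; rewrite -ltNge Fq_lam_max_lt0 //.
by apply: le_trans G_le; rewrite le_max lexx orbT.
Qed.

End Fq_theory.

Theorem lemma3p1 (R : realType) (m L alpha delta lamS : R)
  (hm : 0 < m) (hmL : m < L) (halpha : 0 < alpha)
  (hd0 : 0 < delta) (hd1 : delta < 1)
  (hlam : 0 <= lamS <= 2 / delta ^+ 2)
  (hF1 : 0 <= Fq m L alpha delta (rho_star m L alpha delta) lamS)
  (hF2 : 0 <= Fq m L alpha delta (- rho_star m L alpha delta) lamS) :
  [/\ Num.min (Fq m L alpha delta (rho_star m L alpha delta) lamS)
              (Fq m L alpha delta (- rho_star m L alpha delta) lamS) = 0,
      0 < lamS < 2 / delta ^+ 2 &
      (0 < Num.max (Fq m L alpha delta (rho_star m L alpha delta) lamS)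
                   (Fq m L alpha delta (- rho_star m L alpha delta) lamS) ->
       rho_star m L alpha delta = rhoGD m L alpha delta)].
Proof.
have G_le := rhoGD_le_rho_star hm hmL halpha hd0 hd1.
have lam_in := Fq_nonneg_lam_interior hm hmL halpha hd0 G_le hlam hF1 hF2.
move: G_le; rewrite le_eqVlt => /orP[/eqP G_eq | G_lt].
  split=> //; apply/le_anti; rewrite le_min hF1 hF2 andbT.
  by rewrite -G_eq Fq_rhoGD_min_le0.
have [-> ->] := Fq_rho_star_eq0 hm hmL halpha hd0 hd1 G_lt lam_in hF1 hF2.
by rewrite minxx maxxx ltxx.
Qed.
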